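(* Let $x\in\Pi[N]$, $h=H(x)$, and for $\mu\in\{0,1\}$ and $l\in\mathbb Z$ let $y^{\mu}[l]=\langle x,\psi_{[1],\mu}[\cdot-2l]\rangle$, $c^{\mu}[l]=\langle x,\varphi_{[1],\mu}[\cdot-2l]\rangle$ (both $N/2$-periodic in $l$), and $z^{\mu}_{\pm}=y^{\mu}\mp i\,c^{\mu}$. For an $N/2$-periodic sequence $v$ write $\hat v[n]_1=\sum_{l=0}^{N/2-1}v[l]\,\omega^{-2ln}$. Then for every $n\in\{0,\dots,N/2-1\}$: (i) $\begin{pmatrix}\hat z^{0}_{\pm}[n]_1\\ \hat z^{1}_{\pm}[n]_1\end{pmatrix}=\tfrac12\,\overline{\tilde M^{q}_{\pm}[n]}\begin{pmatrix}\hat x[n]\\ \hat x[n+N/2]\end{pmatrix}$, where the bar denotes entrywise complex conjugation; (ii) $M^{q}_{\pm}[n]\begin{pmatrix}\hat z^{0}_{\pm}[n]_1\\ \hat z^{1}_{\pm}[n]_1\end{pmatrix}=2\begin{pmatrix}\hat x[n]\pm i\,\hat h[n]\\ \hat x[n+N/2]\pm i\,\hat h[n+N/2]\end{pmatrix}$. In particular, applying the analysis filter bank with modulation matrix $\tilde M^q_{\pm}$ followed by the synthesis filter bank with modulation matrix $M^q_{\pm}$ to $x$ yields $2(x\pm iH(x))$, twice the analytic signal of $x$.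
   Context: Let $N=2^{J}$ with $J\ge 1$ an integer and $\omega=e^{2\pi i/N}$. $\Pi[N]$ denotes the real vector space of real-valued $N$-periodic sequences $x=\{x[k]\}_{k\in\mathbb Z}$, with inner product $\langle x,y\rangle=\sum_{k=0}^{N-1}x[k]y[k]$. The DFT of an $N$-periodic sequence is $\hat x[n]=\sum_{k=0}^{N-1}x[k]\omega^{-kn}$, with inverse $x[k]=\frac1N\sum_{n=0}^{N-1}\hat x[n]\omega^{kn}$. For $x\in\Pi[N]$, its discrete periodic Hilbert transform $H(x)\in\Pi[N]$ has DFT $\widehat{H(x)}[n]=-i\hat x[n]$ for $0<n<N/2$, $=i\hat x[n]$ for $N/2<n<N$, and $=0$ for $n\in\{0,N/2\}$ (indices mod $N$). Fix an integer $r\ge1$; let $U[n]=\tfrac12\big(\cos^{4r}\tfrac{\pi n}{N}+\sin^{4r}\tfrac{\pi n}{N}\big)$, $\beta[n]=\cos^{2r}\tfrac{\pi n}{N}/\sqrt{U[n]}$, $\alpha[n]=\omega^{n}\sin^{2r}\tfrac{\pi n}{N}/\sqrt{U[n]}$. The first-level wavelet packets $\psi_{[1],0},\psi_{[1],1}\in\Pi[N]$ have DFTs $\hat\psi_{[1],0}=\beta$, $\hat\psi_{[1],1}=\alpha$; the complementary wavelet packets $\varphi_{[1],\mu}\in\Pi[N]$ have DFT $\hat\varphi_{[1],\mu}[n]=-i\hat\psi_{[1],\mu}[n]$ for $0<n<N/2$, $=i\hat\psi_{[1],\mu}[n]$ for $N/2<n<N$, $=\hat\psi_{[1],\mu}[n]$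 for $n\in\{0,N/2\}$. Write $\hat g^{\mu}=\hat\varphi_{[1],\mu}$. Modulation matrices: $\tilde M[n]=\begin{pmatrix}\beta[n]&\beta[n+N/2]\\ \alpha[n]&\alpha[n+N/2]\end{pmatrix}$, $M[n]=\tilde M[n]^{T}$; $\tilde M^{c}[n]=\begin{pmatrix}\hat g^{0}[n]&\hat g^{0}[n+N/2]\\ \hat g^{1}[n]&\hat g^{1}[n+N/2]\end{pmatrix}$, $M^{c}[n]=\tilde M^{c}[n]^{T}$; and $\tilde M^{q}_{\pm}[n]=\tilde M[n]\pm i\,\tilde M^{c}[n]$, $M^{q}_{\pm}[n]=M[n]\pm i\,M^{c}[n]$. *)

From Stdlib Require Import Reals ZArith.
Open Scope R_scope.

Definition C : Type := (R * R)%type.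
Definition RtoC (a : R) : C := (a, 0).
Definition C0 : C := (0, 0).
Definition Ci : C := (0, 1).
Definition Cadd (z w : C) : C := (fst z + fst w, snd z + snd w).
Definition Cmul (z w : C) : C :=
  (fst z * fst w - snd z * snd w, fst z * snd w + snd z * fst w).
Definition Copp (z : C) : C := (- fst z, - snd z).
Definition Cconj (z : C) : C := (fst z, - snd z).
Definition Cexpi (t : R) : C := (cos t, sin t).

Fixpoint Csum (n : nat) (f : nat -> C) : C :=
  match n with O => C0 | S m => Cadd (Csum m f) (f m) end.
Fixpoint Rsum (n : nat) (f : nat -> R) : R :=
  match n with O => 0 | S m => Rsum m f + f m end.

(* sign for the +/- choice: s = true means "+", s = false means "-" *)
Definition sg (s : bool) : R := if s then 1 else -1.

Definition periodic (N : nat) (x : Z -> R) : Prop :=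
  forall k : Z, x (k + Z.of_nat N)%Z = x k.

Definition wpow (N : nat) (m : Z) : C := Cexpi (2 * PI * IZR m / INR N).

Definition dft (N : nat) (x : Z -> R) (n : Z) : C :=
  Csum N (fun k => Cmul (RtoC (x (Z.of_nat k))) (wpow N (- (Z.of_nat k * n)))).

Definition hilb_mult (N : nat) (n : Z) : C :=
  let Nz := Z.of_nat N in
  let m := (n mod Nz)%Z in
  if ((0 <? m) && (m <? Nz / 2))%Z%bool then Copp Ci
  else if ((Nz / 2 <? m) && (m <? Nz))%Z%bool then Ci
  else C0.

(* DFT of the complementary packet: -i f, i f, or f (indices mod N). *)
Definition compl_hat (N : nat) (f : Z -> C) (n : Z) : C :=
  let Nz := Z.of_nat N in
  let m := (n mod Nz)%Z in
  if ((0 <? m) && (m <? Nz / 2))%Z%bool then Cmul (Copp Ci) (f n)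
  else if ((Nz / 2 <? m) && (m <? Nz))%Z%bool then Cmul Ci (f n)
  else f n.

Definition cosN (N : nat) (n : Z) : R := cos (PI * IZR n / INR N).
Definition sinN (N : nat) (n : Z) : R := sin (PI * IZR n / INR N).
Definition Uf (N r : nat) (n : Z) : R :=
  / 2 * (cosN N n ^ (4 * r) + sinN N n ^ (4 * r)).
Definition beta (N r : nat) (n : Z) : C :=
  RtoC (cosN N n ^ (2 * r) / sqrt (Uf N r n)).
Definition alpha (N r : nat) (n : Z) : C :=
  Cmul (wpow N n) (RtoC (sinN N n ^ (2 * r) / sqrt (Uf N r n))).

Definition coef (N : nat) (x f : Z -> R) (l : Z) : R :=
  Rsum N (fun k => x (Z.of_nat k) * f (Z.of_nat k - 2 * l)%Z).

Definition zpm (s : bool) (y c : Z -> R) (l : Z) : C :=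
  Cadd (RtoC (y l)) (Cmul (RtoC (- sg s)) (Cmul Ci (RtoC (c l)))).

Definition dft1 (N : nat) (v : Z -> C) (n : Z) : C :=
  Csum (N / 2) (fun l => Cmul (v (Z.of_nat l)) (wpow N (- (2 * Z.of_nat l * n)))).

Definition modmat (N : nat) (f0 f1 : Z -> C) (n : Z) (i j : nat) : C :=
  let f := match i with O => f0 | _ => f1 end in
  match j with O => f n | _ => f (n + Z.of_nat N / 2)%Z end.

Definition Mt (N r : nat) : Z -> nat -> nat -> C :=
  modmat N (beta N r) (alpha N r).
Definition Mtc (N r : nat) : Z -> nat -> nat -> C :=
  modmat N (compl_hat N (beta N r)) (compl_hat N (alpha N r)).
Definition Mtq (N r : nat) (s : bool) (n : Z) (i j : nat) : C :=
  Cadd (Mt N r n i j) (Cmul (RtoC (sg s)) (Cmul Ci (Mtc N r n i j))).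
Definition Mq (N r : nat) (s : bool) (n : Z) (i j : nat) : C := Mtq N r s n j i.

From Pilot Require Import Defs.
From Stdlib Require Import Reals ZArith Lra Lia Psatz.
Open Scope R_scope.

(* Write N = 2M.  The proof has three independent ingredients.
   1. Spectrum of the analysis coefficients (statement (i)).  Writing
      <x, f[. - 2l]> as a correlation, swapping sums, and using the translation
      theorem together with downsampling by 2 (which folds the spectrum onto n
      and n + M) gives  sum_l <x, f[.-2l]> omega^{-2ln}
        = (conj fhat(n) xhat(n) + conj fhat(n+M) xhat(n+M)) / 2;  by linearity
      this is (i) for the quadrature packets psi -+ i phi.
   2. The filters: beta, alpha are power complementary (|beta|^2+|alpha|^2 = 2)
      and the two rows of the modulation matrix are orthogonal, since the
      frequency shift by M turns cos into -sin and omega^{-M} = -1.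
   3. The multipliers: the quadrature packet has DFT fhat * q with
      q = 1 +- i m (m the complementary-packet multiplier), and
      |q|^2 = 2 (1 +- i h) with h the Hilbert multiplier, at every frequency.
   A 2x2 perfect-reconstruction identity combines 2 and 3 into (ii). *)

Ltac Csolve :=
  apply injective_projections; unfold Cadd, Cmul, Copp, Cconj, RtoC, C0, Ci;
  cbn [fst snd]; first [ring | field].

Lemma Csum_ext n f g :
  (forall k, (k < n)%nat -> f k = g k) -> Csum n f = Csum n g.
Proof.
  induction n as [|n IH]; intros Hfg; simpl; [reflexivity|].
  rewrite IH by (intros; apply Hfg; lia). rewrite Hfg by lia. reflexivity.
Qed.

Lemma Csum_add n f g :
  Csum n (fun k => Cadd (f k) (g k)) = Cadd (Csum n f) (Csum n g).
Proof. induction n as [|n IH]; simpl; [|rewrite IH]; Csolve. Qed.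

Lemma Csum_mull a n f : Csum n (fun k => Cmul a (f k)) = Cmul a (Csum n f).
Proof. induction n as [|n IH]; simpl; [|rewrite IH]; Csolve. Qed.

Lemma Csum_mulr a n f : Csum n (fun k => Cmul (f k) a) = Cmul (Csum n f) a.
Proof. induction n as [|n IH]; simpl; [|rewrite IH]; Csolve. Qed.

Lemma Csum_swap n m (f : nat -> nat -> Defs.C) :
  Csum n (fun i => Csum m (fun j => f i j)) = Csum m (fun j => Csum n (fun i => f i j)).
Proof.
  induction n as [|n IH]; simpl.
  - induction m as [|m IHm]; simpl; [reflexivity|]. rewrite <- IHm. Csolve.
  - rewrite IH, <- Csum_add. reflexivity.
Qed.

Lemma RtoC_Rsum n f : RtoC (Rsum n f) = Csum n (fun k => RtoC (f k)).
Proof. induction n as [|n IH]; simpl; [|rewrite <- IH]; Csolve. Qed.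

Lemma Cconj_Csum n f : Cconj (Csum n f) = Csum n (fun k => Cconj (f k)).
Proof. induction n as [|n IH]; simpl; [|rewrite <- IH]; Csolve. Qed.

Lemma Csum_first n f : Csum (S n) f = Cadd (f O) (Csum n (fun k => f (S k))).
Proof. induction n as [|n IH]; simpl in *; [|rewrite IH]; Csolve. Qed.

Definition Cperiodic (N : nat) (F : Z -> Defs.C) : Prop :=
  forall z, F (z + Z.of_nat N)%Z = F z.

Lemma Csum_shift1 N F : Cperiodic N F ->
  Csum N (fun k => F (Z.of_nat k + 1)%Z) = Csum N (fun k => F (Z.of_nat k)).
Proof.
  intros HF.
  pose proof (Csum_first N (fun k => F (Z.of_nat k))) as E. simpl Csum in E at 1.
  replace (F (Z.of_nat N)) with (F 0%Z) in E by (rewrite <- (HF 0%Z); reflexivity).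
  erewrite (Csum_ext N (fun k => F (Z.of_nat (S k)))) in E
    by (intros; rewrite Nat2Z.inj_succ; reflexivity).
  simpl Z.of_nat in E. unfold Z.succ in E.
  apply injective_projections; [apply (f_equal fst) in E | apply (f_equal snd) in E];
    unfold Cadd in E; cbn [fst snd] in E; lra.
Qed.

Lemma Csum_shift N F m : Cperiodic N F ->
  Csum N (fun k => F (Z.of_nat k + Z.of_nat m)%Z) = Csum N (fun k => F (Z.of_nat k)).
Proof.
  revert F; induction m as [|m IH]; intros F HF.
  - apply Csum_ext; intros. rewrite Z.add_0_r. reflexivity.
  - rewrite <- (IH F HF).
    rewrite <- (Csum_shift1 N (fun z => F (z + Z.of_nat m)%Z)).
    + apply Csum_ext; intros. apply f_equal; lia.
    + intro z. simpl. rewrite <- (HF (z + Z.of_nat m)%Z). apply f_equal; lia.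
Qed.

Lemma wpow_add N a b : wpow N (a + b) = Cmul (wpow N a) (wpow N b).
Proof.
  unfold wpow, Cexpi, Cmul; cbn [fst snd]. rewrite plus_IZR.
  replace (2 * PI * (IZR a + IZR b) / INR N)
    with (2 * PI * IZR a / INR N + 2 * PI * IZR b / INR N) by (unfold Rdiv; ring).
  rewrite cos_plus, sin_plus. f_equal; ring.
Qed.

Lemma wpow_0 N : wpow N 0 = RtoC 1.
Proof.
  unfold wpow, Cexpi, RtoC. replace (2 * PI * IZR 0 / INR N) with 0 by (simpl; unfold Rdiv; ring).
  rewrite cos_0, sin_0. reflexivity.
Qed.

Lemma wpow_conj N m : Cconj (wpow N m) = wpow N (- m).
Proof.
  unfold wpow, Cexpi, Cconj; cbn [fst snd]. rewrite opp_IZR.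
  replace (2 * PI * - IZR m / INR N) with (- (2 * PI * IZR m / INR N)) by (unfold Rdiv; ring).
  rewrite cos_neg, sin_neg. reflexivity.
Qed.

Lemma wpow_unit N m : Cmul (wpow N m) (Cconj (wpow N m)) = RtoC 1.
Proof. rewrite wpow_conj, <- wpow_add, Z.add_opp_diag_r. apply wpow_0. Qed.

Lemma wpow_full N : N <> 0%nat -> wpow N (Z.of_nat N) = RtoC 1.
Proof.
  intros HN. unfold wpow, Cexpi, RtoC. rewrite <- INR_IZR_INZ.
  replace (2 * PI * INR N / INR N) with (2 * PI) by (field; apply not_0_INR; exact HN).
  rewrite cos_2PI, sin_2PI. reflexivity.
Qed.

Lemma wpow_period N m q : N <> 0%nat -> wpow N (m + Z.of_nat N * q) = wpow N m.
Proof.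
  intros HN. induction q as [|q IH|q IH] using Z.peano_ind.
  - rewrite Z.mul_0_r, Z.add_0_r. reflexivity.
  - replace (m + Z.of_nat N * Z.succ q)%Z with (m + Z.of_nat N * q + Z.of_nat N)%Z by lia.
    rewrite wpow_add, IH, wpow_full by exact HN. Csolve.
  - rewrite <- IH.
    replace (m + Z.of_nat N * q)%Z with (m + Z.of_nat N * Z.pred q + Z.of_nat N)%Z by lia.
    rewrite (wpow_add N (m + Z.of_nat N * Z.pred q)), wpow_full by exact HN. Csolve.
Qed.

(* omega^{N/2} = -1 for N = 2M, hence omega^{-kM} = (-1)^k *)
Lemma wpow_half M k : M <> 0%nat ->
  wpow (2 * M) (- (Z.of_nat k * Z.of_nat M)) = RtoC ((-1) ^ k).
Proof.
  intros HM.
  assert (Hm1 : wpow (2 * M) (- Z.of_nat M) = RtoC (-1)).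
  { unfold wpow, Cexpi, RtoC. rewrite opp_IZR, <- INR_IZR_INZ, mult_INR.
    replace (2 * PI * - INR M / (INR 2 * INR M)) with (- PI)
      by (simpl; field; apply not_0_INR; exact HM).
    rewrite cos_neg, sin_neg, cos_PI, sin_PI, Ropp_0. reflexivity. }
  induction k as [|k IH].
  - apply wpow_0.
  - replace (- (Z.of_nat (S k) * Z.of_nat M))%Z
      with (- (Z.of_nat k * Z.of_nat M) + - Z.of_nat M)%Z by lia.
    rewrite wpow_add, IH, Hm1. change ((-1) ^ S k) with (-1 * (-1) ^ k). Csolve.
Qed.

Lemma Csum_even M g :
  Cadd (Csum (2 * M) g) (Csum (2 * M) (fun k => Cmul (RtoC ((-1) ^ k)) (g k))) =
  Cmul (RtoC 2) (Csum M (fun l => g (2 * l)%nat)).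
Proof.
  induction M as [|M IH]; [simpl; Csolve|].
  replace (2 * S M)%nat with (S (S (2 * M))) by lia. cbn [Csum]. rewrite pow_1_even, pow_1_odd.
  transitivity (Cadd (Cadd (Csum (2 * M) g)
                          (Csum (2 * M) (fun k => Cmul (RtoC ((-1) ^ k)) (g k))))
                     (Cmul (RtoC 2) (g (2 * M)%nat))); [Csolve|].
  rewrite IH. Csolve.
Qed.

Lemma dft_translate N (x : Z -> R) (j : nat) n : N <> 0%nat -> periodic N x ->
  dft N (fun z => x (z + Z.of_nat j)%Z) n = Cmul (wpow N (Z.of_nat j * n)) (dft N x n).
Proof.
  intros HN Hx. unfold dft. rewrite <- Csum_mull.
  set (G := fun z => Cmul (RtoC (x z)) (wpow N (- ((z - Z.of_nat j) * n)))).
  assert (HG : Cperiodic N G).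
  { intro z. unfold G. rewrite Hx.
    replace (- ((z + Z.of_nat N - Z.of_nat j) * n))%Z
      with (- ((z - Z.of_nat j) * n) + Z.of_nat N * - n)%Z by ring.
    rewrite wpow_period by exact HN. reflexivity. }
  transitivity (Csum N (fun k => G (Z.of_nat k + Z.of_nat j)%Z)).
  - apply Csum_ext; intros k _. unfold G.
    replace (Z.of_nat k + Z.of_nat j - Z.of_nat j)%Z with (Z.of_nat k) by ring. reflexivity.
  - rewrite Csum_shift by exact HG. apply Csum_ext; intros k _. unfold G.
    replace (- ((Z.of_nat k - Z.of_nat j) * n))%Z
      with (Z.of_nat j * n + - (Z.of_nat k * n))%Z by ring.
    rewrite wpow_add. Csolve.
Qed.

Lemma dft_conj_mul N (f : Z -> R) n X :
  Csum N (fun j => Cmul (RtoC (f (Z.of_nat j))) (Cmul (wpow N (Z.of_nat j * n)) X)) =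
  Cmul (Cconj (dft N f n)) X.
Proof.
  unfold dft. rewrite Cconj_Csum, <- Csum_mulr. apply Csum_ext; intros k _.
  rewrite <- (Z.opp_involutive (Z.of_nat k * n)) at 1. rewrite <- wpow_conj. Csolve.
Qed.

Lemma coef_as_correlation N (x f : Z -> R) l : periodic N x -> periodic N f ->
  RtoC (coef N x f (Z.of_nat l)) =
  Csum N (fun j => Cmul (RtoC (f (Z.of_nat j))) (RtoC (x (Z.of_nat j + 2 * Z.of_nat l)%Z))).
Proof.
  intros Hx Hf. unfold coef. rewrite RtoC_Rsum.
  set (G := fun z => RtoC (x z * f (z - 2 * Z.of_nat l)%Z)).
  assert (HG : Cperiodic N G).
  { intro z. unfold G. rewrite Hx.
    replace (z + Z.of_nat N - 2 * Z.of_nat l)%Z with (z - 2 * Z.of_nat l + Z.of_nat N)%Z by ring.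
    rewrite Hf. reflexivity. }
  change (Csum N (fun k => G (Z.of_nat k)) =
          Csum N (fun j => Cmul (RtoC (f (Z.of_nat j))) (RtoC (x (Z.of_nat j + 2 * Z.of_nat l)%Z)))).
  rewrite <- (Csum_shift N G (2 * l)) by exact HG.
  apply Csum_ext; intros j _. unfold G.
  replace (Z.of_nat j + Z.of_nat (2 * l) - 2 * Z.of_nat l)%Z with (Z.of_nat j) by lia.
  replace (Z.of_nat j + Z.of_nat (2 * l))%Z with (Z.of_nat j + 2 * Z.of_nat l)%Z by lia.
  Csolve.
Qed.

Lemma filters_power_complementary N r k :
  Cadd (Cmul (beta N r k) (Cconj (beta N r k))) (Cmul (alpha N r k) (Cconj (alpha N r k))) =
  RtoC 2.
Proof.
  unfold beta, alpha, Uf.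
  set (c := cosN N k). set (s := sinN N k).
  assert (Hcs : c ^ 2 + s ^ 2 = 1).
  { unfold c, s, cosN, sinN. pose proof (sin2_cos2 (PI * IZR k / INR N)) as H.
    unfold Rsqr in H. lra. }
  replace (4 * r)%nat with (2 * r * 2)%nat by lia. rewrite !(pow_mult _ (2 * r) 2).
  set (a := c ^ (2 * r)). set (b := s ^ (2 * r)).
  assert (Hab : 0 < a ^ 2 + b ^ 2).
  { destruct (Req_dec c 0) as [Hc|Hc].
    - assert (Hb : b <> 0) by (apply pow_nonzero; intro; subst; nra). nra.
    - assert (Ha : a <> 0) by (apply pow_nonzero; exact Hc). nra. }
  set (U := / 2 * (a ^ 2 + b ^ 2)).
  assert (HU : 0 < U) by (unfold U; lra).
  pose proof (sqrt_lt_R0 U HU) as Hu. pose proof (sqrt_sqrt U (Rlt_le _ _ HU)) as Huu.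
  set (u := sqrt U) in *.
  transitivity (Cadd (RtoC (a ^ 2 / (u * u)))
                     (Cmul (Cmul (wpow N k) (Cconj (wpow N k))) (RtoC (b ^ 2 / (u * u))))).
  { Csolve; lra. }
  rewrite wpow_unit, Huu. unfold U. Csolve. lra.
Qed.

Definition compl_mult (N : nat) (n : Z) : Defs.C :=
  let Nz := Z.of_nat N in
  let m := (n mod Nz)%Z in
  if ((0 <? m) && (m <? Nz / 2))%Z%bool then Copp Ci
  else if ((Nz / 2 <? m) && (m <? Nz))%Z%bool then Ci
  else RtoC 1.

Lemma compl_hat_mult N f n : compl_hat N f n = Cmul (compl_mult N n) (f n).
Proof.
  unfold compl_hat, compl_mult.
  destruct (_ && _)%bool; [reflexivity|]. destruct (_ && _)%bool; [reflexivity|]. Csolve.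
Qed.

Definition quad_factor (N : nat) (s : bool) (n : Z) : Defs.C :=
  Cadd (RtoC 1) (Cmul (RtoC (sg s)) (Cmul Ci (compl_mult N n))).

Lemma quadrature_entry N s (f : Z -> Defs.C) n :
  Cadd (f n) (Cmul (RtoC (sg s)) (Cmul Ci (compl_hat N f n))) = Cmul (f n) (quad_factor N s n).
Proof. unfold quad_factor. rewrite compl_hat_mult. Csolve. Qed.

(* |1 +- i m|^2 = 2 (1 +- i h), h the Hilbert multiplier: this is where the
   analytic signal x +- i H(x) appears. *)
Lemma quad_factor_norm N s n :
  Cmul (quad_factor N s n) (Cconj (quad_factor N s n)) =
  Cmul (RtoC 2) (Cadd (RtoC 1) (Cmul (RtoC (sg s)) (Cmul Ci (hilb_mult N n)))).
Proof.
  unfold quad_factor, compl_mult, hilb_mult.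
  destruct (_ && _)%bool; [|destruct (_ && _)%bool]; destruct s; unfold sg; Csolve.
Qed.

Lemma two_band_reconstruction (f00 f01 f10 f11 q0 q1 u0 u1 : Defs.C) :
  Cadd (Cmul f00 (Cconj f00)) (Cmul f10 (Cconj f10)) = RtoC 2 ->
  Cadd (Cmul f01 (Cconj f01)) (Cmul f11 (Cconj f11)) = RtoC 2 ->
  Cadd (Cmul f00 (Cconj f01)) (Cmul f10 (Cconj f11)) = C0 ->
  let z0 := Cmul (RtoC (/ 2)) (Cadd (Cmul (Cconj (Cmul f00 q0)) u0)
                                    (Cmul (Cconj (Cmul f01 q1)) u1)) in
  let z1 := Cmul (RtoC (/ 2)) (Cadd (Cmul (Cconj (Cmul f10 q0)) u0)
                                    (Cmul (Cconj (Cmul f11 q1)) u1)) in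
  Cadd (Cmul (Cmul f00 q0) z0) (Cmul (Cmul f10 q0) z1) = Cmul (Cmul q0 (Cconj q0)) u0 /\
  Cadd (Cmul (Cmul f01 q1) z0) (Cmul (Cmul f11 q1) z1) = Cmul (Cmul q1 (Cconj q1)) u1.
Proof.
  intros G0 G1 G01 z0 z1. unfold z0, z1. split.
  - transitivity (Cmul (RtoC (/ 2)) (Cadd
      (Cmul (Cmul q0 (Cconj q0)) (Cmul (Cadd (Cmul f00 (Cconj f00)) (Cmul f10 (Cconj f10))) u0))
      (Cmul (Cmul q0 (Cconj q1)) (Cmul (Cadd (Cmul f00 (Cconj f01)) (Cmul f10 (Cconj f11))) u1)))).
    + Csolve.
    + rewrite G0, G01. Csolve.
  - transitivity (Cmul (RtoC (/ 2)) (Cadd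
      (Cmul (Cmul q1 (Cconj q0)) (Cmul (Cconj (Cadd (Cmul f00 (Cconj f01)) (Cmul f10 (Cconj f11)))) u0))
      (Cmul (Cmul q1 (Cconj q1)) (Cmul (Cadd (Cmul f01 (Cconj f01)) (Cmul f11 (Cconj f11))) u1)))).
    + Csolve.
    + rewrite G1, G01. Csolve.
Qed.

Section EvenLength.
Variable M : nat.
Hypothesis HM : (0 < M)%nat.

Lemma half_length : (Z.of_nat (2 * M) / 2 = Z.of_nat M)%Z.
Proof. rewrite Nat2Z.inj_mul, Z.mul_comm. apply Z.div_mul. lia. Qed.

Lemma dft_downsample (y : Z -> R) n :
  Csum M (fun l => Cmul (RtoC (y (2 * Z.of_nat l)%Z)) (wpow (2 * M) (- (2 * Z.of_nat l * n)))) =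
  Cmul (RtoC (/ 2)) (Cadd (dft (2 * M) y n) (dft (2 * M) y (n + Z.of_nat M))).
Proof.
  set (g := fun k : nat => Cmul (RtoC (y (Z.of_nat k))) (wpow (2 * M) (- (Z.of_nat k * n)))).
  assert (Hshift : dft (2 * M) y (n + Z.of_nat M) =
                   Csum (2 * M) (fun k => Cmul (RtoC ((-1) ^ k)) (g k))).
  { unfold dft. apply Csum_ext; intros k _. unfold g.
    replace (- (Z.of_nat k * (n + Z.of_nat M)))%Z
      with (- (Z.of_nat k * n) + - (Z.of_nat k * Z.of_nat M))%Z by lia.
    rewrite wpow_add, wpow_half by lia. Csolve. }
  rewrite Hshift. change (dft (2 * M) y n) with (Csum (2 * M) g). rewrite Csum_even.
  transitivity (Csum M (fun l => g (2 * l)%nat)).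
  - apply Csum_ext; intros l _. unfold g. rewrite Nat2Z.inj_mul.
    replace (Z.of_nat 2 * Z.of_nat l * n)%Z with (2 * Z.of_nat l * n)%Z by lia. reflexivity.
  - Csolve.
Qed.

Lemma coef_spectrum (x f : Z -> R) n : periodic (2 * M) x -> periodic (2 * M) f ->
  Csum M (fun l => Cmul (RtoC (coef (2 * M) x f (Z.of_nat l)))
                        (wpow (2 * M) (- (2 * Z.of_nat l * n)))) =
  Cmul (RtoC (/ 2)) (Cadd (Cmul (Cconj (dft (2 * M) f n)) (dft (2 * M) x n))
     (Cmul (Cconj (dft (2 * M) f (n + Z.of_nat M))) (dft (2 * M) x (n + Z.of_nat M)))).
Proof.
  intros Hx Hf.
  assert (HN : (2 * M <> 0)%nat) by lia.
  transitivity (Csum (2 * M) (fun j => Csum M (fun l => Cmul (RtoC (f (Z.of_nat j)))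
     (Cmul (RtoC (x (Z.of_nat j + 2 * Z.of_nat l)%Z))
           (wpow (2 * M) (- (2 * Z.of_nat l * n))))))).
  { rewrite <- Csum_swap. apply Csum_ext; intros l _.
    rewrite coef_as_correlation, <- Csum_mulr by assumption.
    apply Csum_ext; intros j _. Csolve. }
  transitivity (Csum (2 * M) (fun j => Cmul (RtoC (f (Z.of_nat j)))
     (Cmul (RtoC (/ 2)) (Cadd (Cmul (wpow (2 * M) (Z.of_nat j * n)) (dft (2 * M) x n))
        (Cmul (wpow (2 * M) (Z.of_nat j * (n + Z.of_nat M))) (dft (2 * M) x (n + Z.of_nat M))))))).
  { apply Csum_ext; intros j _. rewrite Csum_mull. f_equal.
    rewrite <- !dft_translate by assumption.
    rewrite <- (dft_downsample (fun z => x (z + Z.of_nat j)%Z)).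
    apply Csum_ext; intros l _. rewrite Z.add_comm. reflexivity. }
  rewrite <- !dft_conj_mul, <- Csum_add, <- Csum_mull.
  apply Csum_ext; intros j _. Csolve.
Qed.

Lemma analysis_row s (x f g : Z -> R) n :
  periodic (2 * M) x -> periodic (2 * M) f -> periodic (2 * M) g ->
  dft1 (2 * M) (zpm s (coef (2 * M) x f) (coef (2 * M) x g)) n =
  Cmul (RtoC (/ 2)) (Cadd
    (Cmul (Cconj (Cadd (dft (2 * M) f n) (Cmul (RtoC (sg s)) (Cmul Ci (dft (2 * M) g n)))))
          (dft (2 * M) x n))
    (Cmul (Cconj (Cadd (dft (2 * M) f (n + Z.of_nat M))
                       (Cmul (RtoC (sg s)) (Cmul Ci (dft (2 * M) g (n + Z.of_nat M))))))
          (dft (2 * M) x (n + Z.of_nat M)))).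
Proof.
  intros Hx Hf Hg. unfold dft1, zpm.
  replace ((2 * M) / 2)%nat with M by (rewrite Nat.mul_comm, Nat.div_mul; lia).
  transitivity (Cadd
    (Csum M (fun l => Cmul (RtoC (coef (2 * M) x f (Z.of_nat l)))
                          (wpow (2 * M) (- (2 * Z.of_nat l * n)))))
    (Cmul (Cmul (RtoC (- sg s)) Ci)
       (Csum M (fun l => Cmul (RtoC (coef (2 * M) x g (Z.of_nat l)))
                             (wpow (2 * M) (- (2 * Z.of_nat l * n))))))).
  { rewrite <- Csum_mull, <- Csum_add. apply Csum_ext; intros; Csolve. }
  rewrite !coef_spectrum by assumption. Csolve.
Qed.

Lemma quadrature_analysis s (x f g : Z -> R) (F : Z -> Defs.C) n :
  (0 <= n < Z.of_nat M)%Z ->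
  periodic (2 * M) x -> periodic (2 * M) f -> periodic (2 * M) g ->
  (forall k, (0 <= k < Z.of_nat (2 * M))%Z -> dft (2 * M) f k = F k) ->
  (forall k, (0 <= k < Z.of_nat (2 * M))%Z -> dft (2 * M) g k = compl_hat (2 * M) F k) ->
  dft1 (2 * M) (zpm s (coef (2 * M) x f) (coef (2 * M) x g)) n =
  Cmul (RtoC (/ 2))
    (Cadd (Cmul (Cconj (Cmul (F n) (quad_factor (2 * M) s n))) (dft (2 * M) x n))
          (Cmul (Cconj (Cmul (F (n + Z.of_nat M)%Z) (quad_factor (2 * M) s (n + Z.of_nat M))))
                (dft (2 * M) x (n + Z.of_nat M)))).
Proof.
  intros Hn Hx Hf Hg HfF HgF.
  rewrite analysis_row, !HfF, !HgF, !quadrature_entry by (assumption || lia).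
  reflexivity.
Qed.

(* Shifting the frequency by N/2 = M shifts the angle pi n / N by pi/2. *)
Lemma cosN_sinN_shift r n :
  cosN (2 * M) (n + Z.of_nat M) ^ (2 * r) = sinN (2 * M) n ^ (2 * r) /\
  sinN (2 * M) (n + Z.of_nat M) ^ (2 * r) = cosN (2 * M) n ^ (2 * r).
Proof.
  unfold cosN, sinN. rewrite plus_IZR, <- INR_IZR_INZ.
  replace (PI * (IZR n + INR M) / INR (2 * M)) with (PI * IZR n / INR (2 * M) + PI / 2)
    by (rewrite mult_INR; simpl; field; apply not_0_INR; lia).
  rewrite cos_plus, sin_plus, cos_PI2, sin_PI2, !pow_mult.
  split; f_equal; ring.
Qed.

Lemma Uf_shift r n : Uf (2 * M) r (n + Z.of_nat M) = Uf (2 * M) r n.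
Proof.
  unfold Uf. replace (4 * r)%nat with (2 * (2 * r))%nat by lia.
  destruct (cosN_sinN_shift (2 * r) n) as [Hc Hs]. rewrite Hc, Hs. ring.
Qed.

Lemma filters_orthogonal r n :
  Cadd (Cmul (beta (2 * M) r n) (Cconj (beta (2 * M) r (n + Z.of_nat M))))
       (Cmul (alpha (2 * M) r n) (Cconj (alpha (2 * M) r (n + Z.of_nat M)))) = C0.
Proof.
  unfold beta, alpha. rewrite Uf_shift.
  destruct (cosN_sinN_shift r n) as [Hc Hs]. rewrite Hc, Hs.
  set (a := cosN (2 * M) n ^ (2 * r) / sqrt (Uf (2 * M) r n)).
  set (b := sinN (2 * M) n ^ (2 * r) / sqrt (Uf (2 * M) r n)).
  transitivity (Cmul (RtoC (a * b))
    (Cadd (RtoC 1) (Cmul (wpow (2 * M) n) (Cconj (wpow (2 * M) (n + Z.of_nat M)))))).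
  { Csolve. }
  rewrite wpow_conj, <- wpow_add.
  replace (n + - (n + Z.of_nat M))%Z with (- (Z.of_nat 1 * Z.of_nat M))%Z by lia.
  rewrite wpow_half by lia. Csolve.
Qed.

End EvenLength.

Theorem proposition4p2 (N J r : nat) (HN : N = (2 ^ J)%nat) (HJ : (1 <= J)%nat)
  (Hr : (1 <= r)%nat)
  (x h psi0 psi1 phi0 phi1 : Z -> R)
  (Hx : periodic N x) (Hhp : periodic N h)
  (Hh : forall n : Z, (0 <= n < Z.of_nat N)%Z ->
        dft N h n = Cmul (hilb_mult N n) (dft N x n))
  (Hpsi0p : periodic N psi0) (Hpsi1p : periodic N psi1)
  (Hphi0p : periodic N phi0) (Hphi1p : periodic N phi1)
  (Hpsi0 : forall n : Z, (0 <= n < Z.of_nat N)%Z -> dft N psi0 n = beta N r n)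
  (Hpsi1 : forall n : Z, (0 <= n < Z.of_nat N)%Z -> dft N psi1 n = alpha N r n)
  (Hphi0 : forall n : Z, (0 <= n < Z.of_nat N)%Z ->
           dft N phi0 n = compl_hat N (beta N r) n)
  (Hphi1 : forall n : Z, (0 <= n < Z.of_nat N)%Z ->
           dft N phi1 n = compl_hat N (alpha N r) n)
  (s : bool) (n : Z) (Hn : (0 <= n < Z.of_nat N / 2)%Z) :
  let y0 := coef N x psi0 in
  let y1 := coef N x psi1 in
  let c0 := coef N x phi0 in
  let c1 := coef N x phi1 in
  let Z0 := dft1 N (zpm s y0 c0) n in
  let Z1 := dft1 N (zpm s y1 c1) n in
  let xa := dft N x n in
  let xb := dft N x (n + Z.of_nat N / 2)%Z in
  let ha := dft N h n in
  let hb := dft N h (n + Z.of_nat N / 2)%Z in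
  (* (i) *)
  (Z0 = Cmul (RtoC (/ 2)) (Cadd (Cmul (Cconj (Mtq N r s n 0 0)) xa)
                                (Cmul (Cconj (Mtq N r s n 0 1)) xb)) /\
   Z1 = Cmul (RtoC (/ 2)) (Cadd (Cmul (Cconj (Mtq N r s n 1 0)) xa)
                                (Cmul (Cconj (Mtq N r s n 1 1)) xb))) /\
  (* (ii) *)
  (Cadd (Cmul (Mq N r s n 0 0) Z0) (Cmul (Mq N r s n 0 1) Z1) =
     Cmul (RtoC 2) (Cadd xa (Cmul (RtoC (sg s)) (Cmul Ci ha))) /\
   Cadd (Cmul (Mq N r s n 1 0) Z0) (Cmul (Mq N r s n 1 1) Z1) =
     Cmul (RtoC 2) (Cadd xb (Cmul (RtoC (sg s)) (Cmul Ci hb)))).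
Proof.
  cbv zeta.
  destruct J as [|J]; [lia|].
  set (M := (2 ^ J)%nat) in HN.
  assert (HM : (0 < M)%nat) by (apply Nat.neq_0_lt_0, Nat.pow_nonzero; lia).
  replace N with (2 * M)%nat in * by (rewrite HN; reflexivity). clearbody M. clear HN.
  rewrite half_length in Hn |- * by exact HM.
  rewrite (quadrature_analysis M HM s x psi0 phi0 (beta (2 * M) r)),
          (quadrature_analysis M HM s x psi1 phi1 (alpha (2 * M) r)) by assumption.
  unfold Mq, Mtq, Mt, Mtc, modmat; cbv beta iota.
  rewrite half_length, !quadrature_entry by exact HM.
  split; [split; reflexivity|].
  (* (ii): synthesis after analysis scales each frequency by |quad_factor|^2 *)
  rewrite (Hh n), (Hh (n + Z.of_nat M)%Z) by lia.
  pose proof (two_band_reconstruction (beta (2 * M) r n) (beta (2 * M) r (n + Z.of_nat M))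
    (alpha (2 * M) r n) (alpha (2 * M) r (n + Z.of_nat M))
    (quad_factor (2 * M) s n) (quad_factor (2 * M) s (n + Z.of_nat M))
    (dft (2 * M) x n) (dft (2 * M) x (n + Z.of_nat M))
    (filters_power_complementary _ _ _) (filters_power_complementary _ _ _)
    (filters_orthogonal M HM r n)) as Hrec.
  cbv zeta in Hrec. destruct Hrec as [Hrec0 Hrec1].
  rewrite Hrec0, Hrec1, !quad_factor_norm. split; Csolve.
Qed.
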